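(* Let $d\in\mathbb N$ and let $\rho:SL(2,\mathbb Z)\to GL(d,\mathbb C)$ be a representation such that $\rho(T)$ is diagonalisable with eigenvalues $\lambda_1,\dots,\lambda_d$ (with multiplicity), where $T=\begin{pmatrix}1&1\\0&1\end{pmatrix}$. If no product $\prod_{i\in I}\lambda_i$ over a non-empty proper subset $I\subsetneq\{1,\dots,d\}$ is a $12$th root of unity, then $\rho$ is irreducible. *)

From HB Require Import structures.
From mathcomp Require Import all_boot all_order all_algebra.
From mathcomp Require Import complex.
From mathcomp Require Import reals.
Set Implicit Arguments. Unset Strict Implicit. Unset Printing Implicit Defensive.
Import Order.TTheory GRing.Theory Num.Theory.
Local Open Scope ring_scope.

Definition inSL2Z (A : 'M[int]_2) : Prop := \det A = 1.

(* T = [[1,1],[0,1]] *)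
Definition Tmat : 'M[int]_2 :=
  \matrix_(i < 2, j < 2) (if (i <= j)%N then 1 else 0).

(* rho : SL(2,Z) -> GL(d,F) is a group homomorphism (its values are then
   automatically invertible, since rho 1 = 1 and inverses lie in SL(2,Z)). *)
Definition is_SL2Z_rep (F : fieldType) (d : nat)
    (rho : 'M[int]_2 -> 'M[F]_d) : Prop :=
  rho 1%:M = 1%:M /\
  (forall A B, inSL2Z A -> inSL2Z B -> rho (A *m B) = rho A *m rho B).

(* A subspace of F^d (column vectors), given as the column space of W^T, i.e.
   the row space of the matrix U = W^T, is rho-invariant when
   rho(A) W ⊆ W for all A in SL(2,Z); in row-vector language
   U *m (rho A)^T <= U. *)
Definition rep_invariant (F : fieldType) (d : nat)
    (rho : 'M[int]_2 -> 'M[F]_d) (U : 'M[F]_d) : Prop :=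
  forall A, inSL2Z A -> stablemx U (rho A)^T.

Definition rep_irreducible (F : fieldType) (d : nat)
    (rho : 'M[int]_2 -> 'M[F]_d) : Prop :=
  (0 < d)%N /\
  forall U : 'M[F]_d, rep_invariant rho U -> U = 0 \/ row_full U.

(* The determinant of the action of SL(2,Z) on an invariant subspace U is a
   character of SL(2,Z); as S^4 = 1 and (ST)^3 = S^2 in SL(2,Z), its value at T
   is a 12th root of unity.  Since rho(T) is diagonalisable, that value is also
   the product of dim U of its eigenvalues, so the hypothesis rules out
   0 < dim U < d. *)
From HB Require Import structures.
From mathcomp Require Import all_boot all_order all_algebra.
From mathcomp Require Import complex.
From mathcomp Require Import reals.
Import Order.TTheory GRing.Theory Num.Theory.
Set Implicit Arguments. Unset Strict Implicit. Unset Printing Implicit Defensive.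
Local Open Scope ring_scope.

(* Choose r linearly independent columns of B: on them X acts as the
   corresponding diagonal entries of D, through an invertible r x r block. *)
Lemma det_intertwine_diag (F : fieldType) (r d : nat) (B : 'M[F]_(r, d))
    (D : 'rV[F]_d) (X : 'M[F]_r) :
  row_free B -> X *m B = B *m diag_mx D ->
  exists2 I : {set 'I_d}, #|I| = r & \det X = \prod_(k in I) D 0 k.
Proof.
move=> freeB XB.
have fullBT : row_full B^T by rewrite /row_full mxrank_tr.
set f := fullrankfun fullBT; set C := colsub f B.
have unitC : C \in unitmx.
  rewrite -unitmx_tr (_ : C^T = rowsub f B^T) ?fullrowsub_unit //.
  by apply/matrixP => i j; rewrite !mxE.
have finj : injective f by apply: fullrankfun_inj.
exists [set f j | j : 'I_r]; first by rewrite card_imset // card_ord.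
rewrite big_imset /=; last by move=> ? ? _ _ /finj.
have XC : X *m C = C *m diag_mx (\row_j D 0 (f j)).
  by rewrite /C mulmx_colsub XB; apply/matrixP => i j; rewrite !mul_mx_diag !mxE.
have detC : \det C != 0 by rewrite -unitfE -unitmxE.
apply: (mulIf detC); rewrite -det_mulmx XC det_mulmx det_diag mulrC.
by congr (_ * _); apply: eq_big => [j|j _]; rewrite ?inE ?mxE.
Qed.

Definition Smat : 'M[int]_2 :=
  \matrix_(i < 2, j < 2) (if i == j then 0 else if (i < j)%N then -1 else 1).

Lemma inSL2Z1 : inSL2Z 1%:M.
Proof. exact: det1. Qed.

Lemma inSL2Z_mul (A C : 'M[int]_2) : inSL2Z A -> inSL2Z C -> inSL2Z (A *m C).
Proof. by rewrite /inSL2Z det_mulmx => -> ->; rewrite mulr1. Qed.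

Lemma inSL2Z_S : inSL2Z Smat.
Proof.
by rewrite /inSL2Z (expand_det_row _ 0) !big_ord_recl big_ord0 /cofactor !det_mx11 !mxE.
Qed.

Lemma inSL2Z_T : inSL2Z Tmat.
Proof.
by rewrite /inSL2Z (expand_det_row _ 0) !big_ord_recl big_ord0 /cofactor !det_mx11 !mxE.
Qed.

#[local] Hint Resolve inSL2Z1 inSL2Z_mul inSL2Z_S inSL2Z_T : core.

Ltac mx2_compute := apply/matrixP => - [[|[|//]]] ? [[|[|//]]] ?;
  repeat (rewrite !mxE || rewrite !big_ord_recl !big_ord0).

Lemma Smat_order4 : Smat *m Smat *m Smat *m Smat = 1%:M.
Proof. by mx2_compute. Qed.

Lemma STmat_cube : Smat *m Tmat *m (Smat *m Tmat) *m (Smat *m Tmat) = Smat *m Smat.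
Proof. by mx2_compute. Qed.

Lemma SL2Z_char_T_exp12 (R : comPzRingType) (chi : 'M[int]_2 -> R) :
    chi 1%:M = 1 ->
    (forall A C, inSL2Z A -> inSL2Z C -> chi (A *m C) = chi A * chi C) ->
  chi Tmat ^+ 12 = 1.
Proof.
move=> chi1 chiM.
have chiS4 : chi Smat ^+ 4 = 1.
  by rewrite -chi1 -Smat_order4 !chiM ?exprSr ?expr0 ?mul1r; auto.
have chiST3 : (chi Smat * chi Tmat) ^+ 3 = chi Smat ^+ 2.
  by have := congr1 chi STmat_cube; rewrite !chiM ?exprSr ?expr0 ?mul1r; auto.
have chiS12 : chi Smat ^+ 12 = 1 by rewrite (exprM _ 4 3) chiS4 expr1n.
have : (chi Smat * chi Tmat) ^+ 12 = 1.
  by rewrite (exprM _ 3 4) chiST3 -exprM (exprM _ 4 2) chiS4 expr1n.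
by rewrite exprMn chiS12 mul1r.
Qed.

Section InvariantSubspace.

Variables (F : fieldType) (d : nat) (rho : 'M[int]_2 -> 'M[F]_d).
Hypothesis rho_rep : is_SL2Z_rep rho.
Variable U : 'M[F]_d.
Hypothesis U_inv : rep_invariant rho U.

(* Row-vector convention, as in rep_invariant: hence the transposes, and
   subrep_mx is an anti-homomorphism. *)
Definition subrep_mx (A : 'M[int]_2) : 'M[F]_(\rank U) :=
  row_base U *m (rho A)^T *m pinvmx (row_base U).

Lemma subrep_mxP A :
  inSL2Z A -> subrep_mx A *m row_base U = row_base U *m (rho A)^T.
Proof.
move=> SL_A; apply: mulmxKpV.
by rewrite (eqmxMr _ (eq_row_base U)) eq_row_base; apply: U_inv.
Qed.

Lemma subrep_mxM A C :
  inSL2Z A -> inSL2Z C -> subrep_mx (A *m C) = subrep_mx C *m subrep_mx A.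
Proof.
move=> SL_A SL_C; apply: (row_free_inj (row_base_free U)).
rewrite subrep_mxP; last exact: inSL2Z_mul.
rewrite rho_rep.2 // trmx_mul mulmxA.
by rewrite -[RHS]mulmxA subrep_mxP // mulmxA subrep_mxP.
Qed.

Lemma subrep_mx1 : subrep_mx 1%:M = 1%:M.
Proof.
apply: (row_free_inj (row_base_free U)).
by rewrite subrep_mxP // rho_rep.1 trmx1 mulmx1 mul1mx.
Qed.

Lemma det_subrep_T_exp12 : (\det (subrep_mx Tmat)) ^+ 12 = 1.
Proof.
apply: (SL2Z_char_T_exp12 (chi := fun A => \det (subrep_mx A))).
  by rewrite subrep_mx1 det1.
by move=> A C SL_A SL_C; rewrite subrep_mxM // det_mulmx mulrC.
Qed.

Lemma det_subrep_T_eigen (P : 'M[F]_d) (lam : 'rV[F]_d) :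
    P \in unitmx -> rho Tmat = invmx P *m diag_mx lam *m P ->
  exists2 I : {set 'I_d}, #|I| = \rank U &
    \det (subrep_mx Tmat) = \prod_(k in I) lam 0 k.
Proof.
move=> unitP rhoT; apply: (det_intertwine_diag (B := row_base U *m P^T)).
  by rewrite /row_free mxrankMfree ?row_free_unit ?unitmx_tr //; apply: row_base_free.
rewrite mulmxA subrep_mxP // rhoT !trmx_mul tr_diag_mx.
by rewrite -!mulmxA -trmx_mul mulmxV // trmx1 mulmx1.
Qed.

End InvariantSubspace.

Theorem lemma5p2 (R : realType) (d : nat) (d_gt0 : (0 < d)%N)
    (rho : 'M[int]_2 -> 'M[R[i]]_d) (hrho : is_SL2Z_rep rho)
    (P : 'M[R[i]]_d) (lam : 'rV[R[i]]_d)
    (hP : P \in unitmx)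
    (hT : rho Tmat = invmx P *m diag_mx lam *m P)
    (hlam : forall I : {set 'I_d}, I != set0 -> I != setT ->
              (\prod_(k in I) lam 0 k) ^+ 12 != 1) :
  rep_irreducible rho.
Proof.
split=> // U U_inv; have [-> | U_neq0] := eqVneq U 0; [by left | right].
apply: contraT => U_not_full.
have [I cardI detT] := det_subrep_T_eigen U_inv hP hT.
have : (\prod_(k in I) lam 0 k) ^+ 12 != 1.
  apply: hlam; first by rewrite -card_gt0 cardI lt0n mxrank_eq0.
  apply: contraNneq U_not_full => I_full.
  by rewrite /row_full -cardI I_full cardsT card_ord.
by rewrite -detT (det_subrep_T_exp12 hrho U_inv) eqxx.
Qed.
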